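(* Define $f_i:\mathbb{R}^3\times\mathbb{R}^2\to\mathbb{R}$ by $f_1(p,x)=-x_2-\tfrac12x_1^2-p_1+p_2x_2$, $f_2(p,x)=x_2-\tfrac12x_1^2-p_2+p_1x_1$, $f_3(p,x)=x_1+|x_2|^{3/2}-p_3$, and let $P:=\{p\in\mathbb{R}^3: -p_1-p_2+\tfrac32p_1^2\le0\}$. Then the parametric system $f_i(p,x)\le0$, $i=1,2,3$, $p\in P$, enjoys Robinson stability at $(\bar p,\bar x)=(0,0)\in\mathbb{R}^3\times\mathbb{R}^2$, i.e. there exist $\kappa\ge0$ and neighborhoods $V$ of $0$ in $P$ and $U$ of $0$ in $\mathbb{R}^2$ such that $\operatorname{dist}(x;\Gamma(p))\le\kappa\operatorname{dist}((f_1,f_2,f_3)(p,x);\mathbb{R}^3_-)$ for all $(p,x)\in V\times U$, where $\Gamma(p)=\{x:f_i(p,x)\le0,\ i=1,2,3\}$; whereas the Mangasarian–Fromovitz constraint qualification fails for the system $f_i(0,x)\le0$, $i=1,2,3$, at $x=0$.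
   Context: The Mangasarian–Fromovitz constraint qualification for the inequality system $\phi_i(x)\le0$ at a feasible $\bar x$ (all $\phi_i$ differentiable) means there exists $d$ with $\langle\nabla\phi_i(\bar x),d\rangle<0$ for all active indices $i$ (those with $\phi_i(\bar x)=0$). *)

From Stdlib Require Import Reals Lra.
Open Scope R_scope.

(* |t|^(3/2), written so that it is correct at t = 0
   (Stdlib's Rpower 0 y is not 0). *)
Definition abs32 (t : R) : R := Rabs t * sqrt (Rabs t).

Definition f (i : nat) (p1 p2 p3 x1 x2 : R) : R :=
  match i with
  | 1%nat => - x2 - / 2 * x1 ^ 2 - p1 + p2 * x2
  | 2%nat => x2 - / 2 * x1 ^ 2 - p2 + p1 * x1
  | _     => x1 + abs32 x2 - p3
  end.

Definition idx (i : nat) : Prop := (1 <= i <= 3)%nat.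

Definition inP (p1 p2 p3 : R) : Prop := - p1 - p2 + 3 / 2 * p1 ^ 2 <= 0.

Definition Gamma (p1 p2 p3 : R) (y1 y2 : R) : Prop :=
  forall i, idx i -> f i p1 p2 p3 y1 y2 <= 0.

Definition norm2 (a b : R) : R := sqrt (a ^ 2 + b ^ 2).
Definition norm3 (a b c : R) : R := sqrt (a ^ 2 + b ^ 2 + c ^ 2).

(* dist((y1,y2); S) <= r, with dist = infimum of Euclidean distances
   (inf of the empty set = +infinity). *)
Definition dist2_le (S : R -> R -> Prop) (x1 x2 r : R) : Prop :=
  forall eps, 0 < eps -> exists y1 y2, S y1 y2 /\ norm2 (x1 - y1) (x2 - y2) <= r + eps.

(* dist(x; Gamma(p)) <= kappa * dist(F(p,x); R^3_-), with the distance to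
   R^3_- written as an infimum over points z of R^3_- (kappa >= 0). *)
Definition robinson_ineq (kappa p1 p2 p3 x1 x2 : R) : Prop :=
  forall z1 z2 z3, z1 <= 0 -> z2 <= 0 -> z3 <= 0 ->
    dist2_le (Gamma p1 p2 p3) x1 x2
      (kappa * norm3 (f 1 p1 p2 p3 x1 x2 - z1)
                     (f 2 p1 p2 p3 x1 x2 - z2)
                     (f 3 p1 p2 p3 x1 x2 - z3)).

(* Robinson stability at (pbar, xbar) = (0, 0): there are kappa >= 0 and
   neighbourhoods V of 0 in P and U of 0 in R^2 (containing balls of radius
   delta) on which the estimate holds. *)
Definition robinson_stable_at_0 : Prop :=
  exists kappa delta, 0 <= kappa /\ 0 < delta /\
    forall p1 p2 p3 x1 x2,
      inP p1 p2 p3 -> norm3 p1 p2 p3 < delta -> norm2 x1 x2 < delta ->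
      robinson_ineq kappa p1 p2 p3 x1 x2.

Definition has_grad (g : R -> R -> R) (a1 a2 g1 g2 : R) : Prop :=
  forall eps, 0 < eps -> exists delta, 0 < delta /\
    forall h1 h2, norm2 h1 h2 < delta ->
      Rabs (g (a1 + h1) (a2 + h2) - g a1 a2 - (g1 * h1 + g2 * h2))
        <= eps * norm2 h1 h2.

Definition phi (i : nat) (x1 x2 : R) : R := f i 0 0 0 x1 x2.

Definition MFCQ_at_0 : Prop :=
  exists d1 d2, forall i, idx i -> phi i 0 0 = 0 ->
    forall g1 g2, has_grad (phi i) 0 0 g1 g2 -> g1 * d1 + g2 * d2 < 0.

From Stdlib Require Import Reals Lra Psatz.
Open Scope R_scope.

(* Robinson stability: given (p, x) near 0 with residual m, first move x1 to
   the left by 4m.  This lowers f_3 by 4m and changes f_1, f_2 by O(m).  The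
   combination f_1 + (1 - p2) f_2 does not depend on x2 and is a concave
   quadratic in x1 whose maximum is nonpositive exactly because p lies in P;
   since f_1 and f_2 have slopes -(1 - p2) and 1 in x2, a shift of x2 by O(m)
   then makes both of them nonpositive, and this shift costs f_3 at most
   O(m) times the small Lipschitz constant of |x2|^(3/2) near 0.
   MFCQ fails because the gradients of the active constraints phi_1 and phi_2
   at 0 are (0, -1) and (0, 1). *)

Lemma Rabs_le_inv a b : Rabs a <= b -> - b <= a <= b.
Proof. unfold Rabs; destruct (Rcase_abs a); lra. Qed.

Lemma Rabs_le_sqrt_add a s : 0 <= s -> Rabs a <= sqrt (a ^ 2 + s).
Proof.
  intros Hs. rewrite <- sqrt_Rsqr_abs. apply sqrt_le_1_alt. unfold Rsqr. nra.
Qed.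

Lemma Rabs_le_norm2_l a b : Rabs a <= norm2 a b.
Proof. apply Rabs_le_sqrt_add; nra. Qed.

Lemma Rabs_le_norm2_r a b : Rabs b <= norm2 a b.
Proof.
  unfold norm2; rewrite Rplus_comm. apply Rabs_le_sqrt_add; nra.
Qed.

Lemma norm2_le_Rabs_add a b : norm2 a b <= Rabs a + Rabs b.
Proof.
  pose proof (Rabs_pos a); pose proof (Rabs_pos b).
  unfold norm2. rewrite <- (sqrt_pow2 (Rabs a + Rabs b)) by lra.
  apply sqrt_le_1_alt. rewrite <- (pow2_abs a), <- (pow2_abs b). nra.
Qed.

Lemma Rabs_le_norm3_1 a b c : Rabs a <= norm3 a b c.
Proof.
  unfold norm3; rewrite Rplus_assoc. apply Rabs_le_sqrt_add; nra.
Qed.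

Lemma Rabs_le_norm3_2 a b c : Rabs b <= norm3 a b c.
Proof.
  unfold norm3; replace (a ^ 2 + b ^ 2 + c ^ 2) with (b ^ 2 + (a ^ 2 + c ^ 2)) by ring.
  apply Rabs_le_sqrt_add; nra.
Qed.

Lemma Rabs_le_norm3_3 a b c : Rabs c <= norm3 a b c.
Proof.
  unfold norm3; rewrite Rplus_comm. apply Rabs_le_sqrt_add; nra.
Qed.

Lemma idx_cases i : idx i -> i = 1%nat \/ i = 2%nat \/ i = 3%nat.
Proof. unfold idx; lia. Qed.

Lemma abs32_0 : abs32 0 = 0.
Proof. unfold abs32; rewrite Rabs_R0; ring. Qed.

Lemma abs32_ge0 a : 0 <= abs32 a.
Proof. apply Rmult_le_pos; [apply Rabs_pos | apply sqrt_pos]. Qed.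

(* With u = sqrt|a| and v = sqrt|b| at most r:
   v^3 - u^3 = (v - u)(v^2 + uv + u^2) <= (v - u)(u + v) 3r/2 = (v^2 - u^2) 3r/2. *)
Lemma abs32_lipschitz r a b : 0 <= r -> Rabs a <= r ^ 2 -> Rabs b <= r ^ 2 ->
  abs32 b - abs32 a <= 3 / 2 * r * Rabs (b - a).
Proof.
  intros Hr Ha Hb. unfold abs32.
  assert (Su : sqrt (Rabs a) <= r) by (rewrite <- (sqrt_pow2 r Hr); apply sqrt_le_1_alt; lra).
  assert (Sv : sqrt (Rabs b) <= r) by (rewrite <- (sqrt_pow2 r Hr); apply sqrt_le_1_alt; lra).
  pose proof (sqrt_pos (Rabs a)). pose proof (sqrt_pos (Rabs b)).
  pose proof (sqrt_sqrt (Rabs a) (Rabs_pos a)) as Eu.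
  pose proof (sqrt_sqrt (Rabs b) (Rabs_pos b)) as Ev.
  pose proof (Rabs_triang_inv b a) as T. pose proof (Rabs_pos (b - a)).
  set (u := sqrt (Rabs a)) in *. set (v := sqrt (Rabs b)) in *.
  rewrite <- Eu, <- Ev in T |- *.
  destruct (Rle_dec u v).
  - assert (v * v <= r * v) by nra. assert (u * u <= r * u) by nra.
    assert (u * v <= r * u) by nra. assert (u * v <= r * v) by nra.
    assert (v * v + u * v + u * u <= 3 / 2 * r * (u + v)) by lra.
    assert ((v - u) * (v * v + u * v + u * u) <= (v - u) * (3 / 2 * r * (u + v)))
      by (apply Rmult_le_compat_l; lra).
    nra.
  - assert (v * v <= u * u) by nra. assert (v * v * v <= u * u * u) by nra.
    assert (0 <= r * Rabs (b - a)) by (apply Rmult_le_pos; lra). lra.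
Qed.

Lemma concave_quadratic_le a b y : 0 < a -> 2 * a * (- a / 2 * y ^ 2 + b * y) <= b ^ 2.
Proof. intros Ha. pose proof (pow2_ge_0 (a * y - b)). nra. Qed.

(* The maximum ((1 - p2) p1)^2 / (2 (2 - p2)) of the concave quadratic below
   is at most p1 + (1 - p2) p2: near 0 this is where the constraint defining P
   enters. *)
Lemma inP_quadratic_bound p1 p2 p3 : inP p1 p2 p3 -> Rabs p1 <= 1/100 -> Rabs p2 <= 1/100 ->
  ((1 - p2) * p1) ^ 2 <= 2 * (2 - p2) * (p1 + (1 - p2) * p2).
Proof.
  unfold inP; intros HP H1 H2.
  apply Rabs_le_inv in H1; apply Rabs_le_inv in H2.
  set (s := p1 + p2 - 3/2 * p1 ^ 2).
  assert (Hs : 0 <= s) by (unfold s; lra).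
  assert (Hp2 : p2 = s - p1 + 3/2 * p1 ^ 2) by (unfold s; ring).
  assert (Hsle : s <= 1/20) by (unfold s; nra).
  assert (0 <= s * (1 - s + 2 * p1 - 3 * p1 ^ 2)) by (apply Rmult_le_pos; nra).
  assert (0 <= p1 ^ 2 * (1/10 + 3 * p1 - 9/4 * p1 ^ 2)) by (apply Rmult_le_pos; nra).
  rewrite Hp2 in *. nra.
Qed.

Lemma f1_add_f2_nonpos p1 p2 p3 y1 y2 :
  inP p1 p2 p3 -> Rabs p1 <= 1/100 -> Rabs p2 <= 1/100 ->
  f 1 p1 p2 p3 y1 y2 + (1 - p2) * f 2 p1 p2 p3 y1 y2 <= 0.
Proof.
  intros HP H1 H2.
  pose proof (inP_quadratic_bound p1 p2 p3 HP H1 H2) as Hq.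
  apply Rabs_le_inv in H2.
  pose proof (concave_quadratic_le (2 - p2) ((1 - p2) * p1) y1 ltac:(lra)) as Hc.
  replace (f 1 p1 p2 p3 y1 y2 + (1 - p2) * f 2 p1 p2 p3 y1 y2)
    with (- (2 - p2) / 2 * y1 ^ 2 + (1 - p2) * p1 * y1 - (p1 + (1 - p2) * p2))
    by (unfold f; field).
  nra.
Qed.

Lemma opposite_slopes_shift c g1 g2 : 0 < c -> g1 + c * g2 <= 0 ->
  exists s, g1 + c * s <= 0 /\ g2 - s <= 0 /\ Rabs s <= Rmax 0 g2 + Rmax 0 g1 / c.
Proof.
  intros Hc Hg. exists (Rmax 0 g2 - Rmax 0 g1 / c).
  assert (Hcv : c * (Rmax 0 g1 / c) = Rmax 0 g1) by (field; lra).
  assert (0 <= Rmax 0 g1 / c) by (apply Rmult_le_pos; [apply Rmax_l | apply Rlt_le, Rinv_0_lt_compat; lra]).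
  pose proof (Rmax_l 0 g2).
  repeat split.
  - rewrite Rmult_minus_distr_l, Hcv.
    unfold Rmax; destruct (Rle_dec 0 g2), (Rle_dec 0 g1); nra.
  - unfold Rmax in *; destruct (Rle_dec 0 g2), (Rle_dec 0 g1); nra.
  - apply Rabs_le; lra.
Qed.

Lemma f_le_of_small p1 p2 p3 x1 x2 i :
  Rabs p1 <= 1/100 -> Rabs p2 <= 1/100 -> Rabs p3 <= 1/100 ->
  Rabs x1 <= 1/100 -> Rabs x2 <= 1/100 -> idx i -> f i p1 p2 p3 x1 x2 <= 3/100.
Proof.
  intros Hp1 Hp2 Hp3 Hx1 Hx2 Hi.
  pose proof (abs32_lipschitz (1/3) 0 x2 ltac:(lra) ltac:(rewrite Rabs_R0; lra) ltac:(lra))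
    as Hlip.
  rewrite abs32_0, !Rminus_0_r in Hlip.
  pose proof (Rabs_le_inv _ _ Hx2).
  apply Rabs_le_inv in Hp1, Hp2, Hp3, Hx1.
  destruct (idx_cases i Hi) as [-> | [-> | ->]]; unfold f.
  - nra.
  - nra.
  - lra.
Qed.

Lemma feasible_point_near p1 p2 p3 x1 x2 m :
  inP p1 p2 p3 -> Rabs p1 <= 1/100 -> Rabs p2 <= 1/100 ->
  Rabs x1 <= 1/100 -> Rabs x2 <= 1/100 -> 0 <= m <= 3/100 ->
  (forall i, idx i -> f i p1 p2 p3 x1 x2 <= m) ->
  exists y1 y2, Gamma p1 p2 p3 y1 y2 /\ norm2 (x1 - y1) (x2 - y2) <= 8 * m.
Proof.
  intros HP Hp1 Hp2 Hx1 Hx2 Hm HF.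
  assert (F1 := HF 1%nat ltac:(unfold idx; lia)).
  assert (F2 := HF 2%nat ltac:(unfold idx; lia)).
  assert (F3 := HF 3%nat ltac:(unfold idx; lia)).
  set (t := 4 * m). set (y1 := x1 - t). set (c := 1 - p2).
  set (g1 := f 1 p1 p2 p3 y1 x2). set (g2 := f 2 p1 p2 p3 y1 x2).
  pose proof (f1_add_f2_nonpos p1 p2 p3 y1 x2 HP Hp1 Hp2) as Hcomb.
  apply Rabs_le_inv in Hp1, Hp2, Hx1, Hx2.
  assert (Hc : 1/2 <= c) by (unfold c; lra).
  destruct (opposite_slopes_shift c g1 g2 ltac:(lra) Hcomb) as [s [Hs1 [Hs2 Hs]]].
  assert (Hg1 : Rmax 0 g1 <= 104/100 * m)
    by (apply Rmax_lub; [lra | unfold g1, y1, t in *; unfold f in *; nra]).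
  assert (Hg2 : Rmax 0 g2 <= 108/100 * m)
    by (apply Rmax_lub; [lra | unfold g2, y1, t in *; unfold f in *; nra]).
  assert (Hdiv : Rmax 0 g1 / c <= 2 * Rmax 0 g1).
  { pose proof (Rmax_l 0 g1). unfold Rdiv.
    assert (/ c <= 2) by (rewrite <- (Rinv_inv 2); apply Rinv_le_contravar; lra). nra. }
  assert (Hsm : Rabs s <= 316/100 * m) by lra.
  exists y1, (x2 - s). split.
  - intros i Hi. destruct (idx_cases i Hi) as [-> | [-> | ->]].
    + replace (f 1 p1 p2 p3 y1 (x2 - s)) with (g1 + c * s) by (unfold g1, c, f; ring). lra.
    + replace (f 2 p1 p2 p3 y1 (x2 - s)) with (g2 - s) by (unfold g2, f; ring). lra.
    + apply Rabs_le_inv in Hs as Hsb.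
      pose proof (abs32_lipschitz (1/3) x2 (x2 - s) ltac:(lra)
                    ltac:(apply Rabs_le; lra) ltac:(apply Rabs_le; lra)) as Hlip.
      replace (x2 - s - x2) with (- s) in Hlip by ring. rewrite Rabs_Ropp in Hlip.
      replace (f 3 p1 p2 p3 y1 (x2 - s))
        with (f 3 p1 p2 p3 x1 x2 - t + (abs32 (x2 - s) - abs32 x2)) by (unfold y1, f; ring).
      unfold t; lra.
  - eapply Rle_trans; [apply norm2_le_Rabs_add |].
    replace (x1 - y1) with t by (unfold y1; ring).
    replace (x2 - (x2 - s)) with s by ring.
    rewrite Rabs_pos_eq by (unfold t; lra). unfold t; lra.
Qed.

Lemma robinson_stability : robinson_stable_at_0.
Proof.
  exists 8, (1/100). split; [lra | split; [lra |]].
  intros p1 p2 p3 x1 x2 HP Hp Hx z1 z2 z3 Hz1 Hz2 Hz3.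
  set (F := fun i => f i p1 p2 p3 x1 x2).
  set (M := norm3 (F 1%nat - z1) (F 2%nat - z2) (F 3%nat - z3)).
  pose proof (Rabs_le_norm3_1 p1 p2 p3). pose proof (Rabs_le_norm3_2 p1 p2 p3).
  pose proof (Rabs_le_norm3_3 p1 p2 p3).
  pose proof (Rabs_le_norm2_l x1 x2). pose proof (Rabs_le_norm2_r x1 x2).
  assert (HFM : forall i, idx i -> F i <= M).
  { pose proof (Rabs_le_norm3_1 (F 1%nat - z1) (F 2%nat - z2) (F 3%nat - z3)).
    pose proof (Rabs_le_norm3_2 (F 1%nat - z1) (F 2%nat - z2) (F 3%nat - z3)).
    pose proof (Rabs_le_norm3_3 (F 1%nat - z1) (F 2%nat - z2) (F 3%nat - z3)).
    pose proof (Rle_abs (F 1%nat - z1)). pose proof (Rle_abs (F 2%nat - z2)).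
    pose proof (Rle_abs (F 3%nat - z3)).
    intros i Hi; destruct (idx_cases i Hi) as [-> | [-> | ->]]; unfold M; lra. }
  assert (HM : 0 <= M) by apply sqrt_pos.
  (* Since z <= 0, the residual M bounds every f_i; the cap 3/100 keeps the
     correction within the range where its estimates hold. *)
  destruct (feasible_point_near p1 p2 p3 x1 x2 (Rmin M (3/100)) HP)
    as [y1 [y2 [HG Hd]]]; try lra.
  - split; [apply Rmin_glb; lra | apply Rmin_r].
  - intros i Hi. apply Rmin_glb; [exact (HFM i Hi) |].
    apply f_le_of_small; auto; lra.
  - intros eps Heps. exists y1, y2. split; [exact HG |].
    pose proof (Rmin_l M (3/100)).
    change (norm2 (x1 - y1) (x2 - y2) <= 8 * M + eps). lra.
Qed.

Lemma phi_at_0 i : idx i -> phi i 0 0 = 0.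
Proof.
  intros Hi. unfold phi.
  destruct (idx_cases i Hi) as [-> | [-> | ->]]; unfold f; rewrite ?abs32_0; ring.
Qed.

Lemma has_grad_ext g h a1 a2 g1 g2 : (forall b1 b2, g b1 b2 = h b1 b2) ->
  has_grad g a1 a2 g1 g2 -> has_grad h a1 a2 g1 g2.
Proof.
  intros Egh Hg eps Heps. destruct (Hg eps Heps) as [delta [Hd Hb]].
  exists delta; split; [exact Hd |]. intros h1 h2. rewrite <- !Egh. apply Hb.
Qed.

Lemma has_grad_linear_sub_half_sq g1 g2 :
  has_grad (fun b1 b2 => g1 * b1 + g2 * b2 - / 2 * b1 ^ 2) 0 0 g1 g2.
Proof.
  intros eps Heps. exists eps. split; [exact Heps |]. intros h1 h2 Hh.
  replace (g1 * (0 + h1) + g2 * (0 + h2) - / 2 * (0 + h1) ^ 2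
           - (g1 * 0 + g2 * 0 - / 2 * 0 ^ 2) - (g1 * h1 + g2 * h2))
    with (- (/ 2 * h1 ^ 2)) by ring.
  pose proof (Rabs_le_norm2_l h1 h2). pose proof (Rabs_pos h1).
  rewrite Rabs_Ropp, Rabs_pos_eq by nra. rewrite <- (pow2_abs h1). nra.
Qed.

Lemma has_grad_add_abs32 : has_grad (fun b1 b2 => b1 + abs32 b2) 0 0 1 0.
Proof.
  intros eps Heps. exists ((2 / 3 * eps) ^ 2). split; [nra |]. intros h1 h2 Hh.
  cbv beta. rewrite !Rplus_0_l.
  replace (h1 + abs32 h2 - abs32 0 - (1 * h1 + 0 * h2)) with (abs32 h2 - abs32 0) by ring.
  pose proof (Rabs_le_norm2_r h1 h2).
  pose proof (abs32_lipschitz (2 / 3 * eps) 0 h2 ltac:(lra)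
                ltac:(rewrite Rabs_R0; nra) ltac:(lra)) as Hlip.
  rewrite abs32_0, Rminus_0_r, Rminus_0_r in Hlip.
  replace (3 / 2 * (2 / 3 * eps)) with eps in Hlip by field.
  rewrite abs32_0, Rminus_0_r, Rabs_pos_eq by apply abs32_ge0.
  assert (eps * Rabs h2 <= eps * norm2 h1 h2) by (apply Rmult_le_compat_l; lra). lra.
Qed.

Lemma phi1_grad : has_grad (phi 1) 0 0 0 (-1).
Proof.
  eapply has_grad_ext; [| exact (has_grad_linear_sub_half_sq 0 (-1))].
  intros b1 b2; cbv beta; unfold phi, f; ring.
Qed.

Lemma phi2_grad : has_grad (phi 2) 0 0 0 1.
Proof.
  eapply has_grad_ext; [| exact (has_grad_linear_sub_half_sq 0 1)].
  intros b1 b2; cbv beta; unfold phi, f; ring.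
Qed.

Lemma phi3_grad : has_grad (phi 3) 0 0 1 0.
Proof.
  eapply has_grad_ext; [| exact has_grad_add_abs32].
  intros b1 b2; cbv beta; unfold phi, f; ring.
Qed.

Lemma phi_differentiable_at_0 i : idx i -> exists g1 g2, has_grad (phi i) 0 0 g1 g2.
Proof.
  intros Hi. destruct (idx_cases i Hi) as [-> | [-> | ->]].
  - exact (ex_intro _ 0 (ex_intro _ (-1) phi1_grad)).
  - exact (ex_intro _ 0 (ex_intro _ 1 phi2_grad)).
  - exact (ex_intro _ 1 (ex_intro _ 0 phi3_grad)).
Qed.

Lemma not_MFCQ_at_0 : ~ MFCQ_at_0.
Proof.
  intros [d1 [d2 H]].
  assert (I1 : idx 1) by (unfold idx; lia). assert (I2 : idx 2) by (unfold idx; lia).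
  pose proof (H 1%nat I1 (phi_at_0 1 I1) _ _ phi1_grad).
  pose proof (H 2%nat I2 (phi_at_0 2 I2) _ _ phi2_grad). lra.
Qed.

Theorem mainTheorem12 :
  robinson_stable_at_0 /\
  (forall i, idx i -> phi i 0 0 <= 0) /\
  (forall i, idx i -> exists g1 g2, has_grad (phi i) 0 0 g1 g2) /\
  ~ MFCQ_at_0.
Proof.
  split; [exact robinson_stability |].
  split; [intros i Hi; rewrite (phi_at_0 i Hi); lra |].
  split; [exact phi_differentiable_at_0 | exact not_MFCQ_at_0].
Qed.
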